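(* Let $G_0^*$ be a $(k,r_0)$-regular hypergraph on $n$ vertices and $G_1^*$ a $(k,r_1)$-regular hypergraph on $m$ vertices. List the eigenvalues of $S(G_0^* )$ with multiplicity as $n-1-2r_0(k-1),\mu_2^{(0)},\dots,\mu_n^{(0)}$, where $\mu_2^{(0)},\dots,\mu_n^{(0)}$ are the eigenvalues of $S(G_0^* )$ on the orthogonal complement of the all-ones vector; similarly list the eigenvalues of $S(G_1^* )$ as $m-1-2r_1(k-1),\mu_2^{(1)},\dots,\mu_m^{(1)}$. Let $\mathcal{S}$ be the Seidel corona matrix of $G_0^*$ and $G_1^*$, and $b=\binom{m-1}{k-2}$. Then the spectrum of $\mathcal{S}$ (as a multiset) consists of: the $2(n-1)$ numbers $$\frac{\mu_i^{(0)}-1-2r_1(k-1)\pm\sqrt{\big(\mu_i^{(0)}+1+2r_1(k-1)\big)^2+16mb^2}}{2},\qquad i=2,\dots,n;$$ each $\mu_j^{(1)}$, $j=2,\dots,m$, with multiplicity $n$; and the two roots $\alpha_1,\alpha_2$ of $$\mu^2+\big(2-n(m+1)+2(r_0+r_1)(k-1)\big)\mu+\big(n-1-2r_0(k-1)\big)\big(mn-1-2r_1(k-1)\big)-m(n-2b)^2=0.$$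
   Context: All hypergraphs are finite and simple: a hypergraph $G^*=(V,E)$ consists of a finite vertex set $V$ and a set $E$ of subsets of $V$ (hyperedges), each of size at least $2$. It is $k$-uniform if every hyperedge has exactly $k$ elements, and $(k,r)$-regular if it is $k$-uniform and every vertex lies in exactly $r$ hyperedges. For a hypergraph with vertices $v_1,\dots,v_n$, the adjacency matrix $A(G^* )$ is the $n\times n$ matrix whose $(i,j)$ entry, for $i\ne j$, is the number of hyperedges containing both $v_i$ and $v_j$, and whose diagonal entries are $0$; the Seidel matrix is $S(G^* )=J_n-I_n-2A(G^* )$. $J_n$ (resp. $J_{a,b}$) is the all-ones $n\times n$ (resp. $a\times b$) matrix, $I_n$ the identity, $\otimes$ the Kronecker product. Binomial coefficients $\binom{x}{y}$ with integers $x\ge 0$ and $y$ are $0$ when $y<0$ or $y>x$. Seidel corona matrix: for $k$-uniform hypergraphs $G_0^*$ on $n$ vertices and $G_1^*$ on $m$ vertices, with $b=\binom{m-1}{k-2}$, $$\mathcal{S}=\begin{bmatrix}S(G_0^* ) & J_{1,m}\otimes(J_n-2bI_n)\\ J_{m,1}\otimes(J_n-2bI_n) & J_m\otimes(J_n-I_n)+S(G_1^* )\otimes I_n\end{bmatrix},$$ which equals $J_{n(m+1)}-I_{n(m+1)}-2\mathcal{A}$ for $\mathcal{A}=\begin{bmatrix}A(G_0^* ) & b(J_{1,m}\otimes I_n)\\ b(J_{m,1}\otimes I_n) & A(G_1^* )\otimes I_n\end{bmatrix}$. *)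

From HB Require Import structures.
From mathcomp Require Import all_boot all_order all_algebra.
From mathcomp Require Export mxtens.
Set Implicit Arguments. Unset Strict Implicit. Unset Printing Implicit Defensive.
Import Order.TTheory GRing.Theory Num.Theory.
Local Open Scope ring_scope.

Definition is_hypergraph (n : nat) (E : {set {set 'I_n}}) : Prop :=
  forall e, e \in E -> (2 <= #|e|)%N.

Definition is_regular_hypergraph (n k r : nat) (E : {set {set 'I_n}}) : Prop :=
  is_hypergraph E /\
  (forall e, e \in E -> #|e| = k) /\
  (forall v : 'I_n, #|[set e in E | v \in e]| = r).

Definition hadj (R : pzRingType) (n : nat) (E : {set {set 'I_n}}) : 'M[R]_n :=
  \matrix_(i, j) (if i != j then (#|[set e in E | (i \in e) && (j \in e)]|)%:R else 0).

Definition hseidel (R : pzRingType) (n : nat) (E : {set {set 'I_n}}) : 'M[R]_n :=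
  const_mx 1 - 1%:M - 2%:R *: hadj R E.

(* b = binom(m-1, k-2), with the convention binom(x,y) = 0 for y < 0 *)
Definition corona_b (m k : nat) : nat := if (k < 2)%N then 0%N else 'C(m.-1, k - 2).

(* Seidel corona matrix, rows/columns indexed by 'I_(n + m*n); Kronecker product
   is [tensmx] (A *t B), index (i1,i2) |-> i1 * (#rows of B) + i2. *)
Definition seidel_corona (R : pzRingType) (n m k : nat)
  (E0 : {set {set 'I_n}}) (E1 : {set {set 'I_m}}) : 'M[R]_(n + m * n) :=
  let b : R := (corona_b m k)%:R in
  let X : 'M[R]_n := const_mx 1 - (2%:R * b) *: 1%:M in
  block_mx (hseidel R E0)
           (castmx (mul1n n, erefl) (tensmx (const_mx 1 : 'M[R]_(1, m)) X))
           (castmx (erefl, mul1n n) (tensmx (const_mx 1 : 'M[R]_(m, 1)) X))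
           (tensmx (const_mx 1 : 'M[R]_m) (const_mx 1 - 1%:M : 'M[R]_n)
              + tensmx (hseidel R E1) (1%:M : 'M[R]_n)).

From mathcomp Require Import all_boot all_order all_fingroup all_algebra.
From mathcomp Require Import ring.
Import GRing.Theory Num.Theory.
Local Open Scope ring_scope.
Set Implicit Arguments. Unset Strict Implicit. Unset Printing Implicit Defensive.

(* By regularity the all-ones vector is a common eigenvector of S(G0), S(G1) and J.
   Conjugating by a basis starting with it splits each Seidel matrix as diag(d, S'),
   where S' carries the eigenvalues mu.  Doing so inside the m copies of G1 (through
   [U *t 1]) separates n copies of S1' and leaves a 2n x 2n matrix whose four n x n
   blocks have the form aJ + cI.  Conjugating that matrix by diag(U, U) makes the four
   blocks block-diagonal: the first coordinates form a 2 x 2 matrix, whose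
   characteristic polynomial is the quadratic, and the rest a block matrix
   [[S0', xI], [yI, zI]] with commuting lower blocks, whose determinant factors over
   the eigenvalues of S0' into quadratics with roots (mu - 1 - c +- disc) / 2. *)

Lemma mul_const_mx (R : pzRingType) p q s (a b : R) :
  (const_mx a : 'M[R]_(p, q)) *m (const_mx b : 'M[R]_(q, s)) = const_mx (a * b *+ q).
Proof.
apply/matrixP=> i j; rewrite !mxE.
under eq_bigr do rewrite !mxE.
by rewrite sumr_const card_ord.
Qed.

Lemma castmx0 (R : nmodType) p q p' q' (e : (p = p') * (q = q')) :
  castmx e (0 : 'M[R]_(p, q)) = 0.
Proof. by apply/matrixP=> i j; rewrite castmxE !mxE. Qed.

Lemma castmxD (R : nmodType) p q p' q' (e : (p = p') * (q = q')) (A B : 'M[R]_(p, q)) :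
  castmx e (A + B) = castmx e A + castmx e B.
Proof. by apply/matrixP=> i j; rewrite [in RHS]mxE !castmxE mxE. Qed.

Lemma det_castmx (R : comNzRingType) p q (e : p = q) (A : 'M[R]_p) :
  \det (castmx (e, e) A) = \det A.
Proof. by case: q / e; rewrite castmx_id. Qed.

Lemma det_block_mx_comm (R : idomainType) p (A B C D : 'M[R]_p) :
  C *m D = D *m C -> \det D != 0 ->
  \det (block_mx A B C D) = \det (A *m D - B *m C).
Proof.
move=> CD_comm detD_neq0.
have eq_prod : block_mx A B C D *m block_mx D 0 (- C) 1%:M
               = block_mx (A *m D - B *m C) B 0 D.
  by rewrite mulmx_block !mulmx0 !mulmx1 ?addr0 !add0r !mulmxN CD_comm subrr.
have := congr1 determinant eq_prod.
rewrite det_mulmx det_lblock det_ublock det1 mulr1.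
exact: mulIf.
Qed.

Section CharPoly.
Variable R : comNzRingType.
Local Notation pC := (map_mx (@polyC R)).

Lemma char_poly_mx_block p q (A : 'M[R]_p) B C (D : 'M[R]_q) :
  char_poly_mx (block_mx A B C D)
  = block_mx (char_poly_mx A) (- pC B) (- pC C) (char_poly_mx D).
Proof.
rewrite /char_poly_mx map_block_mx (scalar_mx_block p q).
by rewrite opp_block_mx add_block_mx !add0r.
Qed.

Lemma char_poly_mx_scalar p (c : R) : char_poly_mx (c%:M : 'M[R]_p) = ('X - c%:P)%:M.
Proof. by rewrite /char_poly_mx map_scalar_mx -raddfB. Qed.

Lemma char_poly_block_diag p q (A : 'M[R]_p) (B : 'M[R]_q) :
  char_poly (block_mx A 0 0 B) = char_poly A * char_poly B.
Proof. by rewrite /char_poly char_poly_mx_block !map_mx0 !oppr0 det_ublock. Qed.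

Lemma char_poly_scalar p (c : R) : char_poly (c%:M : 'M[R]_p) = ('X - c%:P) ^+ p.
Proof. by rewrite /char_poly char_poly_mx_scalar det_scalar. Qed.

Lemma char_poly_castmx p q (e : p = q) (A : 'M[R]_p) :
  char_poly (castmx (e, e) A) = char_poly A.
Proof. by case: q / e; rewrite castmx_id. Qed.

Lemma horner_char_poly p (A : 'M[R]_p) (y : R) : (char_poly A).[y] = \det (y%:M - A).
Proof.
rewrite /char_poly -horner_evalE -det_map_mx; congr (\det _).
apply/matrixP=> i j; rewrite !mxE /= !horner_evalE.
by rewrite hornerD hornerN hornerMn hornerX hornerC.
Qed.

End CharPoly.

Lemma char_poly_simil (R : fieldType) p (A B P : 'M[R]_p) :
  P \in unitmx -> A *m P = P *m B -> char_poly A = char_poly B.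
Proof.
move=> P_unit AP_PB.
have : char_poly_mx A *m map_mx polyC P = map_mx polyC P *m char_poly_mx B.
  by rewrite /char_poly_mx mulmxBl mulmxBr -!map_mxM AP_PB scalar_mxC.
move/(congr1 determinant); rewrite !det_mulmx det_map_mx mulrC; apply: mulfI.
by rewrite polyC_eq0 -unitfE -unitmxE.
Qed.

(* The determinant is computed in the fraction field of [{poly R}], where it is
   [f ^+ p] times the characteristic polynomial evaluated at ['X - g / f]. *)
Lemma det_scale_char_poly_mx (R : fieldType) p (A : 'M[R]_p) (mu : 'I_p -> R)
    (f g : {poly R}) :
  f != 0 -> char_poly A = \prod_(i < p) ('X - (mu i)%:P) ->
  \det (f *: char_poly_mx A - g%:M) = \prod_(i < p) (f * ('X - (mu i)%:P) - g).
Proof.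
move=> f_neq0 charA.
apply/eqP; rewrite -(tofrac_eq (\det _)); apply/eqP; rewrite -det_map_mx.
set F := tofrac f; have F_neq0 : F != 0 by rewrite tofrac_eq0.
set y := tofrac 'X - tofrac g / F.
have -> : map_mx (@tofrac _) (f *: char_poly_mx A - g%:M)
          = F *: (y%:M - map_mx (@tofrac _) (map_mx polyC A)).
  apply/matrixP=> i j; rewrite !mxE; case: (i == j); rewrite /= ?mulr1n ?mulr0n.
    rewrite !rmorphB !rmorphM /= -/F /y rmorphB mulrBr [RHS]mulrBr mulrBr.
    by rewrite [F * (_ / F)]mulrC mulfVK // addrAC.
  by rewrite subr0 sub0r mulrN rmorphN rmorphM sub0r mulrN.
rewrite detZ -horner_char_poly -!map_char_poly charA.
rewrite !map_prod_XsubC horner_prod rmorph_prod.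
rewrite -[p in F ^+ p]card_ord -prodr_const -big_split /=.
apply: eq_bigr => i _.
rewrite hornerXsubC /y !rmorphB rmorphM rmorphB -/F !mulrBr.
by rewrite [F * (_ / F)]mulrC mulfVK // addrAC.
Qed.

Section Tensor.
Variable R : comNzRingType.

Lemma tensmxBl p q r s (A B : 'M[R]_(p, q)) (C : 'M[R]_(r, s)) :
  (A - B) *t C = A *t C - B *t C.
Proof. by apply/matrixP=> i j; rewrite !mxE mulrBl. Qed.

Lemma tens_scalar_mx1 p n (c : R) : (c%:M : 'M_p) *t (1%:M : 'M_n) = c%:M.
Proof.
apply/matrixP=> i j.
case: (mxtens_indexP i) => i0 i1; case: (mxtens_indexP j) => j0 j1.
rewrite tensmxE !mxE (inj_eq (can_inj (@mxtens_indexK _ _))) xpair_eqE.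
by case: (i0 == j0); case: (i1 == j1); rewrite /= ?mulr1 ?mulr0 ?mul0r.
Qed.

Lemma det_tens1mx p n (A : 'M[R]_p) : \det ((1%:M : 'M_n) *t A) = \det A ^+ n.
Proof.
elim: n => [|n IHn]; first by rewrite expr0 det_mx00.
rewrite (scalar_mx_block 1 n 1) tens_block_mx det_castmx !tens0mx det_ublock.
by rewrite tens_scalar_mx scale1r det_castmx IHn exprS.
Qed.

(* [A *t 1] and [1 *t A] differ by the permutation swapping the two tensor factors. *)
Lemma det_tensmx1 p n (A : 'M[R]_p) : \det (A *t (1%:M : 'M_n)) = \det A ^+ n.
Proof.
pose swap (k : 'I_(p * n)) : 'I_(p * n) :=
  cast_ord (mulnC n p) (mxtens_index ((mxtens_unindex k).2, (mxtens_unindex k).1)).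
have swap_inj : injective swap.
  move=> k1 k2 /cast_ord_inj /(can_inj (@mxtens_indexK _ _)) /eqP.
  rewrite xpair_eqE => /andP [/eqP e2 /eqP e1].
  apply: (can_inj (@mxtens_unindexK _ _)).
  by rewrite [LHS]surjective_pairing e1 e2 -surjective_pairing.
pose s := perm swap_inj.
pose B := castmx (mulnC n p, mulnC n p) ((1%:M : 'M_n) *t A).
have -> : A *t 1%:M = row_perm s (col_perm s B).
  apply/matrixP=> k l; rewrite !mxE /B castmxE !permE /swap !cast_ordK tensmxE.
  by rewrite !mxE mulrC.
rewrite row_permE col_permE !det_mulmx !det_perm odd_permV /B det_castmx det_tens1mx.
by rewrite mulrCA -signr_addb addbb expr0 mulr1.
Qed.

End Tensor.

Lemma char_poly_tensmx1 (R : comNzRingType) p n (A : 'M[R]_p) :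
  char_poly (A *t (1%:M : 'M_n)) = char_poly A ^+ n.
Proof.
rewrite /char_poly -det_tensmx1 /char_poly_mx; congr (\det _).
by rewrite tensmxBl tens_scalar_mx1 map_mxT map_mx1.
Qed.

Section OnesBasis.
Variables (R : numFieldType) (p : nat).
Local Notation n := (1 + p)%N.
Local Notation nR := (n%:R : R).
Local Notation e0 := (col_mx 1%:M 0 : 'M[R]_(n, 1)).
Local Notation e0T := (row_mx 1%:M 0 : 'M[R]_(1, n)).

(* Columns: the all-ones vector, then [e_j - e_0] for [0 < j]. *)
Definition ones_basis : 'M[R]_n := block_mx 1 (const_mx (-1)) (const_mx 1) 1.

Definition ones_basis_inv : 'M[R]_n :=
  let s := nR^-1 in block_mx s%:M (const_mx s) (const_mx (- s)) (1 - const_mx s).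

Let nR_neq0 : nR != 0. Proof. by rewrite pnatr_eq0. Qed.

Lemma mulmx_ones_basisV : ones_basis *m ones_basis_inv = 1%:M.
Proof.
have inv_sum : nR^-1 + nR^-1 *+ p = 1.
  by rewrite -mulrS; apply: etrans (mulVf nR_neq0); rewrite mulr_natr.
rewrite /ones_basis /ones_basis_inv mulmx_block !mul1mx !mul_const_mx mulmxBr mulmx1.
rewrite mul_const_mx mul_mx_scalar (scalar_mx_block 1 p 1).
congr block_mx; apply/matrixP=> i j; rewrite !mxE //.
- by rewrite [i]ord1 [j]ord1 eqxx mulr1n mulN1r opprK inv_sum.
- by rewrite mulN1r mulNrn opprK addrCA inv_sum addNr.
- by rewrite mulr1 subrr.
- by rewrite mul1r mulr1n addrCA subrr addr0.
Qed.

Lemma mulVmx_ones_basis : ones_basis_inv *m ones_basis = 1%:M.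
Proof. exact: mulmx1C mulmx_ones_basisV. Qed.

Lemma ones_basis_unit : ones_basis \in unitmx.
Proof. by case: (mulmx1_unit mulmx_ones_basisV). Qed.

Lemma ones_basis_col0 : ones_basis *m e0 = const_mx 1.
Proof.
rewrite /ones_basis mul_block_col !mulmx0 !addr0 !mulmx1.
by apply/matrixP=> i j; rewrite !mxE; case: splitP => k _; rewrite !mxE // !ord1.
Qed.

Lemma const_mx_ones_basis : const_mx 1 *m ones_basis = nR *: e0T.
Proof.
rewrite /ones_basis -[const_mx 1 : 'M_(1, n)]row_mx_const mul_row_block !mulmx1.
rewrite !mul_const_mx scale_row_mx scaler0 scalemx1.
congr row_mx; apply/matrixP=> i j; rewrite !mxE ?ord1 mul1r.
  by rewrite eqxx mulr1n natrD.
by rewrite mulr1n addNr.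
Qed.

Lemma const_mx_conj_ones_basis :
  (const_mx 1 : 'M[R]_n) *m ones_basis = ones_basis *m block_mx nR%:M 0 0 0.
Proof.
have -> : (const_mx 1 : 'M[R]_n) = (const_mx 1 : 'M_(n, 1)) *m (const_mx 1 : 'M_(1, n)).
  by rewrite mul_const_mx mulr1.
rewrite -mulmxA const_mx_ones_basis -ones_basis_col0 -mulmxA -scalemxAr.
by rewrite mul_col_row !mul1mx !mul0mx scale_block_mx !scaler0 scalemx1.
Qed.

Lemma const_scalar_conj_ones_basis (a c : R) :
  (a *: const_mx 1 + c%:M : 'M[R]_n) *m ones_basis
  = ones_basis *m block_mx (a * nR + c)%:M 0 0 c%:M.
Proof.
rewrite mulmxDl -scalemxAl const_mx_conj_ones_basis -scalar_mxC scalemxAr -mulmxDr.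
rewrite (scalar_mx_block 1 p c) scale_block_mx add_block_mx !scaler0 !addr0 add0r.
by rewrite scale_scalar_mx -raddfD.
Qed.

Lemma ones_basis_split (S : 'M[R]_n) (d : R) :
  S *m const_mx 1 = const_mx d :> 'cV_n -> const_mx 1 *m S = const_mx d :> 'rV_n ->
  {S' : 'M[R]_p | S *m ones_basis = ones_basis *m block_mx d%:M 0 0 S'}.
Proof.
move=> row_sum col_sum.
set T := ones_basis_inv *m S *m ones_basis; exists (drsubmx T).
have -> : S *m ones_basis = ones_basis *m T.
  by rewrite /T !mulmxA mulmx_ones_basisV mul1mx.
have const_d q r : (const_mx d : 'M[R]_(q, r)) = d *: const_mx 1.
  by rewrite scalemx_const mulr1.
have T_col0 : T *m e0 = d *: e0.
  rewrite /T -mulmxA ones_basis_col0 -mulmxA row_sum const_d -scalemxAr.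
  by rewrite -ones_basis_col0 mulmxA mulVmx_ones_basis mul1mx.
have T_row0 : e0T *m T = d *: e0T.
  have e0T_inv : e0T *m ones_basis_inv = nR^-1 *: const_mx 1.
    apply: (canRL (scalerK nR_neq0)).
    by rewrite scalemxAl -const_mx_ones_basis -mulmxA mulmx_ones_basisV mulmx1.
  rewrite /T !mulmxA e0T_inv -!scalemxAl col_sum const_d -scalemxAl.
  by rewrite const_mx_ones_basis !scalerA mulrAC mulVf ?nR_neq0 // mul1r.
congr (_ *m _); move: T_col0 T_row0; rewrite -[T]submxK mul_block_col mul_row_block.
rewrite !mulmx1 !mul1mx !mulmx0 !mul0mx !addr0 scale_col_mx scale_row_mx !scaler0.
move=> /eq_col_mx [-> ->] /eq_row_mx [_ ->].
by rewrite scalemx1 block_mxKdr.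
Qed.

End OnesBasis.

Lemma char_poly_ones_basis_split (R : numFieldType) p (S : 'M[R]_(1 + p)) S' d
    (q : {poly R}) :
  S *m ones_basis R p = ones_basis R p *m block_mx d%:M 0 0 S' ->
  char_poly S = ('X - d%:P) * q -> char_poly S' = q.
Proof.
move=> /(char_poly_simil (ones_basis_unit R p)).
rewrite char_poly_block_diag char_poly_scalar expr1 => ->.
by apply: mulfI; rewrite monic_neq0 ?monicXsubC.
Qed.

Section RegularHypergraph.
Variables (n k r : nat) (E : {set {set 'I_n}}).
Hypothesis E_regular : is_regular_hypergraph k r E.

(* Double counting: each of the [r] edges through [i] contributes [k - 1] neighbours. *)
Lemma hadj_row_sum_nat (i : 'I_n) :
  (\sum_(j : 'I_n) (if i != j then #|[set e in E | (i \in e) && (j \in e)]| else 0)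
   = r * k.-1)%N.
Proof.
have [_ [E_card E_deg]] := E_regular.
have card_edges j : (if i != j then #|[set e in E | (i \in e) && (j \in e)]| else 0)
    = (\sum_(e in E) ((i != j) && (i \in e) && (j \in e) : nat))%N.
  rewrite -sum1_card big_mkcond [RHS]big_mkcond /=.
  case: (i != j) => /=; last by rewrite big1 // => e _; case: (_ \in _).
  by apply: eq_bigr => e _; rewrite inE; case: (e \in E).
rewrite (eq_bigr _ (fun j _ => card_edges j)) exchange_big /=.
rewrite (eq_bigr (fun e : {set 'I_n} => if i \in e then k.-1 else 0%N)); last first.
  move=> e eE; case ie: (i \in e) => /=; last by rewrite big1 // => j _; rewrite andbF.
  rewrite -(E_card e eE) (cardsD1 i e) ie add1n /= -sum1_card [RHS]big_mkcond /=.
  by apply: eq_bigr => j _; rewrite !inE andbT eq_sym; case: (_ && _).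
rewrite -big_mkcondr /= sum_nat_const -(E_deg i).
by congr (_ * _)%N; apply: eq_card => e; rewrite !inE.
Qed.

(* For [r > 0] the vertex [i] lies on an edge, which has [k >= 2] vertices, so the
   truncated [k.-1] is [k - 1]. *)
Lemma regular_degree_natr (R : pzRingType) (i : 'I_n) :
  (r * k.-1)%:R = r%:R * (k%:R - 1) :> R.
Proof.
have [E_hyper [E_card E_deg]] := E_regular.
have [->|r_gt0] := posnP r; first by rewrite mul0n !mul0r.
have : (0 < #|[set e in E | i \in e]|)%N by rewrite E_deg.
case/card_gt0P => e; rewrite inE => /andP [eE _].
have := E_hyper e eE; rewrite (E_card e eE).
by case: k => // k' _; rewrite natrM -subn1 natrB.
Qed.

Lemma hadj_mul_ones (R : pzRingType) :
  hadj R E *m const_mx 1 = const_mx (r * k.-1)%:R :> 'cV[R]_n.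
Proof.
apply/matrixP=> i j; rewrite !mxE -(hadj_row_sum_nat i) natr_sum.
by apply: eq_bigr => l _; rewrite !mxE mulr1; case: (i != l).
Qed.

Lemma hseidel_mul_ones (R : pzRingType) :
  hseidel R E *m const_mx 1 = const_mx (n%:R - 1 - 2%:R * r%:R * (k%:R - 1)) :> 'cV[R]_n.
Proof.
rewrite /hseidel !mulmxBl mul1mx mul_const_mx -scalemxAl hadj_mul_ones.
by apply/matrixP=> i j; rewrite !mxE mulr1 (regular_degree_natr R i) mulrA.
Qed.

End RegularHypergraph.

Lemma hadj_tr (R : pzRingType) n (E : {set {set 'I_n}}) : (hadj R E)^T = hadj R E.
Proof.
apply/matrixP=> i j; rewrite !mxE eq_sym.
suff -> : [set e in E | (j \in e) && (i \in e)]
          = [set e in E | (i \in e) && (j \in e)] by [].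
by apply/setP=> e; rewrite !inE [(j \in e) && _]andbC.
Qed.

Lemma hseidel_tr (R : pzRingType) n (E : {set {set 'I_n}}) : (hseidel R E)^T = hseidel R E.
Proof. by rewrite /hseidel !linearB /= linearZ /= hadj_tr trmx_const tr_scalar_mx. Qed.

Lemma ones_mul_hseidel (R : comPzRingType) n k r (E : {set {set 'I_n}}) :
  is_regular_hypergraph k r E ->
  const_mx 1 *m hseidel R E = const_mx (n%:R - 1 - 2%:R * r%:R * (k%:R - 1)) :> 'rV[R]_n.
Proof.
move=> E_regular; apply: trmx_inj.
by rewrite trmx_mul hseidel_tr trmx_const (hseidel_mul_ones E_regular) trmx_const.
Qed.

Lemma mulmx_block_diag (R : pzRingType) p q (A A' : 'M[R]_p) (B B' : 'M[R]_q) :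
  block_mx A 0 0 B *m block_mx A' 0 0 B' = block_mx (A *m A') 0 0 (B *m B').
Proof. by rewrite mulmx_block !mulmx0 !mul0mx !addr0 !add0r. Qed.

Section ConstScalarBlock.
Variables (R : numFieldType) (p : nat).
Local Notation n := (1 + p)%N.
Local Notation nR := (n%:R : R).
Local Notation U := (ones_basis R p).
Local Notation diag2 x c := (block_mx (x%:M : 'M_1) 0 0 (c%:M : 'M_p)).

Lemma char_poly_mx_diag2 (x c : R) :
  char_poly_mx (diag2 x c) = diag2 ('X - x%:P) ('X - c%:P).
Proof. by rewrite char_poly_mx_block !map_mx0 !oppr0 !char_poly_mx_scalar. Qed.

Lemma map_polyC_diag2 (x c : R) : map_mx polyC (diag2 x c) = diag2 x%:P c%:P.
Proof. by rewrite map_block_mx !map_mx0 !map_scalar_mx. Qed.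

Lemma char_poly_const_scalar_block (S : 'M[R]_n) (S' : 'M[R]_p) (d : R)
    (a1 c1 a2 c2 a3 c3 : R) :
  S *m U = U *m block_mx d%:M 0 0 S' ->
  char_poly (block_mx S (a1 *: const_mx 1 + c1%:M) (a2 *: const_mx 1 + c2%:M)
                        (a3 *: const_mx 1 + c3%:M))
  = (('X - d%:P) * ('X - (a3 * nR + c3)%:P) - ((a1 * nR + c1) * (a2 * nR + c2))%:P)
    * \det (('X - c3%:P) *: char_poly_mx S' - (c1 * c2)%:P%:M).
Proof.
move=> S_split.
set x1 := a1 * nR + c1; set x2 := a2 * nR + c2; set x3 := a3 * nR + c3.
pose P : 'M[R]_(n + n) := block_mx U 0 0 U.
have P_unit : P \in unitmx.
  pose P' := block_mx (ones_basis_inv R p) 0 0 (ones_basis_inv R p).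
  case: (@mulmx1_unit _ _ P P') => //.
  by rewrite mulmx_block_diag mulmx_ones_basisV -scalar_mx_block.
pose T := block_mx (block_mx d%:M 0 0 S') (diag2 x1 c1) (diag2 x2 c2) (diag2 x3 c3).
rewrite (@char_poly_simil _ _ _ T P P_unit); last first.
  by rewrite /T /P [LHS]mulmx_block [RHS]mulmx_block !mulmx0 !mul0mx !addr0 !add0r
             S_split !const_scalar_conj_ones_basis.
rewrite /char_poly char_poly_mx_block det_block_mx_comm; last first.
- by have := char_poly_monic (diag2 x3 c3); rewrite /char_poly => /monic_neq0.
- rewrite mulNmx mulmxN map_polyC_diag2 char_poly_mx_diag2 !mulmx_block_diag.
  by rewrite -!scalar_mxM mulrC [c2%:P * _]mulrC.
rewrite !map_polyC_diag2 char_poly_mx_diag2 char_poly_mx_block !map_mx0 !oppr0.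
rewrite char_poly_mx_scalar mulNmx mulmxN opprK !mulmx_block_diag.
rewrite -!scalar_mxM opp_block_mx add_block_mx !oppr0 !addr0 det_ublock.
by rewrite -raddfB det_scalar1 mul_mx_scalar -!polyCM.
Qed.

End ConstScalarBlock.

Section TensorBlocks.
Variables (R : comNzRingType) (n m' : nat).

Lemma tens_row_mx_scalar (a : R) (X : 'M[R]_n) :
  castmx (mul1n n, erefl) (row_mx (a%:M : 'M_1) (0 : 'M_(1, m')) *t X)
  = row_mx (a *: X) 0.
Proof.
rewrite tens_row_mx tens_scalar_mx tens0mx castmx_comp.
by rewrite (castmx_row (mul1n n) (erefl (m' * n))) castmx_comp castmx_id castmx0.
Qed.

Lemma tens_col_mx_1 (X : 'M[R]_n) :
  castmx (erefl, mul1n n) (col_mx (1%:M : 'M_1) (0 : 'M_(m', 1)) *t X) = col_mx X 0.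
Proof.
rewrite tens_col_mx tens_scalar_mx tens0mx castmx_comp scale1r.
by rewrite (castmx_col (mul1n n) (erefl (m' * n))) castmx_comp castmx_id castmx0.
Qed.

Lemma tens_block_diag_scalar (a d : R) (Y : 'M[R]_n) (S' : 'M[R]_m') :
  block_mx (a%:M : 'M_1) 0 0 0 *t Y + block_mx (d%:M : 'M_1) 0 0 S' *t (1%:M : 'M_n)
  = block_mx (a *: Y + d *: 1%:M) 0 0 (S' *t 1%:M).
Proof.
rewrite !tens_block_mx !tens_scalar_mx !tens0mx -castmxD add_block_mx !addr0 add0r.
rewrite (castmx_block (mul1n n) (mul1n n) (erefl (m' * n)) (erefl (m' * n))).
by rewrite castmxD !castmx_comp !castmx_id !castmx0.
Qed.

End TensorBlocks.

Section CoronaReduction.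
Variables (R : numFieldType) (n m' : nat).
Local Notation m := (1 + m')%N.
Local Notation U := (ones_basis R m').

(* Conjugating by [diag(1, U *t 1)] turns the [m] copies of the second factor
   into one aggregated copy of size [n] and [n] copies of [S1']. *)
Lemma char_poly_corona_split (A X Y : 'M[R]_n) (S1 : 'M[R]_m) (S1' : 'M[R]_m') (d1 : R) :
  S1 *m U = U *m block_mx d1%:M 0 0 S1' ->
  char_poly (block_mx A (castmx (mul1n n, erefl) ((const_mx 1 : 'M_(1, m)) *t X))
                        (castmx (erefl, mul1n n) ((const_mx 1 : 'M_(m, 1)) *t X))
                        ((const_mx 1 : 'M_m) *t Y + S1 *t 1%:M))
  = char_poly (block_mx A (m%:R *: X) X (m%:R *: Y + d1 *: 1%:M)) * char_poly S1' ^+ n.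
Proof.
move=> S1_split.
pose Q : 'M[R]_(n + m * n) := block_mx 1%:M 0 0 (U *t 1%:M).
have Q_unit : Q \in unitmx.
  case: (@mulmx1_unit _ _ Q (block_mx 1%:M 0 0 (ones_basis_inv R m' *t 1%:M))) => //.
  rewrite mulmx_block_diag mulmx1 tensmx_mul mulmx_ones_basisV mulmx1 tens_scalar_mx1.
  by rewrite -scalar_mx_block.
pose T : 'M[R]_(n + m * n) :=
  block_mx A
    (castmx (mul1n _, erefl) (row_mx (m%:R%:M : 'M_1) (0 : 'M_(1, m')) *t X))
    (castmx (erefl, mul1n _) (col_mx (1%:M : 'M_1) (0 : 'M_(m', 1)) *t X))
    (block_mx (m%:R%:M : 'M_1) 0 0 0 *t Y + block_mx (d1%:M : 'M_1) 0 0 S1' *t 1%:M).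
rewrite (@char_poly_simil _ _ _ T Q Q_unit); last first.
  rewrite /Q /T [LHS]mulmx_block [RHS]mulmx_block.
  rewrite !mulmx0 !mul0mx !mulmx1 !mul1mx !addr0 !add0r.
  congr block_mx.
  - rewrite -[U *t 1%:M](castmx_id (erefl, erefl)) -castmx_mul tensmx_mul mulmx1.
    by rewrite const_mx_ones_basis scale_row_mx scaler0 scalemx1.
  - rewrite -[U *t 1%:M](castmx_id (erefl, erefl)) -castmx_mul tensmx_mul mul1mx.
    by rewrite ones_basis_col0.
  - rewrite mulmxDl mulmxDr !tensmx_mul !mulmx1 !mul1mx S1_split.
    by rewrite const_mx_conj_ones_basis.
rewrite /T tens_row_mx_scalar tens_col_mx_1 tens_block_diag_scalar.
rewrite block_mxA char_poly_castmx col_mx0 row_mx0 char_poly_block_diag.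
by rewrite char_poly_tensmx1.
Qed.

End CoronaReduction.

Lemma char_poly_seidel_corona (R : numFieldType) n' m' k
    (E0 : {set {set 'I_n'.+1}}) (E1 : {set {set 'I_m'.+1}})
    (S0' : 'M[R]_n') (S1' : 'M[R]_m') (d0 d1 : R) :
  let n : R := n'.+1%:R in let m : R := m'.+1%:R in let b : R := (corona_b m'.+1 k)%:R in
  hseidel R E0 *m ones_basis R n' = ones_basis R n' *m block_mx d0%:M 0 0 S0' ->
  hseidel R E1 *m ones_basis R m' = ones_basis R m' *m block_mx d1%:M 0 0 S1' ->
  char_poly (seidel_corona R k E0 E1)
  = (('X - d0%:P) * ('X - (m * n + (d1 - m))%:P) - (m * (n - 2%:R * b) ^+ 2)%:P)
    * \det (('X - (d1 - m)%:P) *: char_poly_mx S0' - (4%:R * m * b ^+ 2)%:P%:M)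
    * char_poly S1' ^+ n'.+1.
Proof.
move=> n m b S0_split S1_split.
rewrite /seidel_corona -/b (char_poly_corona_split _ _ _ S1_split).
have [-> -> ->] : [/\ const_mx 1 - (2%:R * b) *: 1%:M
                     = 1 *: const_mx 1 + (- (2%:R * b))%:M :> 'M[R]_n'.+1,
    m *: (const_mx 1 - (2%:R * b) *: 1%:M)
      = m *: const_mx 1 + (- (m * 2%:R * b))%:M :> 'M[R]_n'.+1
  & m *: (const_mx 1 - 1%:M) + d1 *: 1%:M
      = m *: const_mx 1 + (d1 - m)%:M :> 'M[R]_n'.+1].
  by split; apply/matrixP=> i j; rewrite !mxE; case: (i == j); rewrite /= ?mulr1n ?mulr0n;
     ring.
rewrite (char_poly_const_scalar_block _ _ _ _ _ _ S0_split).
congr (_ * _ * _).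
  by congr (_ * ('X - _%:P) - _%:P); rewrite /n; ring.
by congr (\det (_ - _%:P%:M)); ring.
Qed.

Lemma mul_XsubC_roots (R : numFieldType) (s x u t D : R) :
  t = x + s -> D ^+ 2 = (x - s) ^+ 2 + 4%:R * u ->
  ('X - ((t + D) / 2%:R)%:P) * ('X - ((t - D) / 2%:R)%:P)
  = ('X - s%:P) * ('X - x%:P) - u%:P.
Proof.
move=> -> D_sqr.
have two_neq0 : 2%:R != 0 :> R by rewrite pnatr_eq0.
have root_sum : (x + s + D) / 2%:R + (x + s - D) / 2%:R = s + x by field.
have root_prod : (x + s + D) / 2%:R * ((x + s - D) / 2%:R) = s * x - u.
  transitivity (((x + s) ^+ 2 - D ^+ 2) / 4%:R); first by field.
  by rewrite D_sqr; field.
have XsubC_mul (y z : R) :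
    ('X - y%:P) * ('X - z%:P) = 'X^2 - (y + z)%:P * 'X + (y * z)%:P.
  by rewrite polyCD polyCM; ring.
by rewrite !XsubC_mul root_sum root_prod polyCB; ring.
Qed.

Lemma char_poly_mx0_neq_XsubC (R : comNzRingType) (A : 'M[R]_0) (c : R) :
  char_poly A <> 'X - c%:P.
Proof.
by move/(congr1 (fun p : {poly R} => size p)); rewrite size_char_poly size_XsubC.
Qed.

Theorem theorem4p3 (R : rcfType) (n m k r0 r1 : nat)
  (E0 : {set {set 'I_n}}) (E1 : {set {set 'I_m}})
  (mu0 : 'I_n.-1 -> R) (mu1 : 'I_m.-1 -> R) :
  is_regular_hypergraph k r0 E0 ->
  is_regular_hypergraph k r1 E1 ->
  char_poly (hseidel R E0)
    = ('X - ((n%:R - 1 - 2%:R * r0%:R * (k%:R - 1)) : R)%:P)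
      * \prod_(i < n.-1) ('X - (mu0 i)%:P) ->
  char_poly (hseidel R E1)
    = ('X - ((m%:R - 1 - 2%:R * r1%:R * (k%:R - 1)) : R)%:P)
      * \prod_(j < m.-1) ('X - (mu1 j)%:P) ->
  let b : R := (corona_b m k)%:R in
  let c : R := 2%:R * r1%:R * (k%:R - 1) in
  let disc (x : R) := Num.sqrt ((x + 1 + c) ^+ 2 + 16%:R * m%:R * b ^+ 2) in
  char_poly (seidel_corona R k E0 E1)
    = (\prod_(i < n.-1)
         (('X - (((mu0 i - 1 - c) + disc (mu0 i)) / 2%:R)%:P)
          * ('X - (((mu0 i - 1 - c) - disc (mu0 i)) / 2%:R)%:P)))
      * (\prod_(j < m.-1) ('X - (mu1 j)%:P)) ^+ n
      * ('X ^+ 2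
         + ((2%:R - n%:R * (m%:R + 1) + 2%:R * (r0%:R + r1%:R) * (k%:R - 1)) : R) *: 'X
         + (((n%:R - 1 - 2%:R * r0%:R * (k%:R - 1))
             * (m%:R * n%:R - 1 - 2%:R * r1%:R * (k%:R - 1))
             - m%:R * (n%:R - 2%:R * b) ^+ 2) : R)%:P).
Proof.
move=> E0_reg E1_reg char_S0 char_S1.
case: n => [|n'] in E0 mu0 E0_reg char_S0 *.
  by move: char_S0; rewrite big_ord0 mulr1 => /char_poly_mx0_neq_XsubC.
case: m => [|m'] in E1 mu1 E1_reg char_S1 *.
  by move: char_S1; rewrite big_ord0 mulr1 => /char_poly_mx0_neq_XsubC.
move=> b c disc.
have [S0' S0_split] :=
  ones_basis_split (hseidel_mul_ones E0_reg R) (ones_mul_hseidel R E0_reg).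
have [S1' S1_split] :=
  ones_basis_split (hseidel_mul_ones E1_reg R) (ones_mul_hseidel R E1_reg).
have char_S0' := char_poly_ones_basis_split S0_split char_S0.
have char_S1' := char_poly_ones_basis_split S1_split char_S1.
rewrite (char_poly_seidel_corona k S0_split S1_split) char_S1'.
rewrite (det_scale_char_poly_mx _ (monic_neq0 (monicXsubC _)) char_S0').
rewrite [RHS]mulrC [RHS]mulrA; congr (_ * _ * _).
  by rewrite -mul_polyC; ring.
apply: eq_bigr => i _; apply/esym/mul_XsubC_roots; first by rewrite /c; ring.
rewrite /disc sqr_sqrtr; first by rewrite /c; ring.
by rewrite addr_ge0 ?sqr_ge0 // !mulr_ge0 ?sqr_ge0 ?ler0n.
Qed.
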